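(* Let $(\mathcal{X},d)$ be a finite metric space, $P$ a probability distribution on $\mathcal{X}$, $k\ge1$ an integer, $O\in\mathcal{X}_k$ an optimal $k$-RP solution, and $\rho\ge1$. Let $S\in\mathcal{X}_k$ be a $k$-multiset returned by a $\rho$-approximation algorithm for the uniform capacitated $k$-median objective, i.e., satisfying $d_W(D_S,P)\le \rho\cdot\min_{T\in\mathcal{X}_k} d_W(D_T,P)$. Then $$\mathbb{E}_{X\sim P_k}[d_k(S,X)]\le (\rho+2)\cdot \mathbb{E}_{X\sim P_k}[d_k(O,X)].$$
   Context: $\mathcal{X}_k$ is the set of multisets of exactly $k$ points of $\mathcal{X}$. For $U,V\in\mathcal{X}_k$, $d_k(U,V)$ is the minimum, over perfect matchings between the $k$ elements of $U$ and the $k$ elements of $V$ (with multiplicity), of the sum of the distances of matched pairs. $P_k$ is the distribution of the multiset of $k$ points drawn i.i.d. from $P$. The $k$-RP cost of $S\in\mathcal{X}_k$ is $\mathbb{E}_{X\sim P_k}[d_k(S,X)]$, and $O$ minimizes this cost. For $T\in\mathcal{X}_k$, $D_T$ is the probability distribution on $\mathcal{X}$ assigning to each $x$ its multiplicity in $T$ divided by $k$. $d_W$ denotes the Wasserstein-1 (earth mover's) distance between probability distributions on $(\mathcal{X},d)$. *)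

From HB Require Import structures.
From mathcomp Require Import all_boot all_order fingroup perm all_algebra.
From mathcomp Require Import classical_sets.
From mathcomp Require Import reals.
Set Implicit Arguments. Unset Strict Implicit. Unset Printing Implicit Defensive.
Import Order.TTheory GRing.Theory Num.Theory.
Local Open Scope ring_scope.
Local Open Scope classical_set_scope.

Definition is_metric (R : realType) (T : finType) (d : T -> T -> R) : Prop :=
  [/\ forall x y, 0 <= d x y,
      forall x y, d x y = 0 <-> x = y,
      forall x y, d x y = d y x &
      forall x y z, d x z <= d x y + d y z].

Definition is_prob (R : realType) (T : finType) (P : T -> R) : Prop :=
  (forall x, 0 <= P x) /\ \sum_(x : T) P x = 1.

(* A k-multiset of points is represented by a k-indexed family of points
   (only the multiset matters: everything below is permutation invariant). *)
Definition kset (T : finType) (k : nat) := {ffun 'I_k -> T}.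

Definition dk (R : realType) (T : finType) (d : T -> T -> R) (k : nat)
  (U V : kset T k) : R :=
  inf [set c : R | exists s : 'S_k, c = \sum_(i < k) d (U i) (V (s i))].

(* k-RP cost: E_{X ~ P_k}[d_k(S,X)], X = multiset of k i.i.d. draws from P *)
Definition kRP_cost (R : realType) (T : finType) (d : T -> T -> R) (P : T -> R)
  (k : nat) (S : kset T k) : R :=
  \sum_(X : kset T k) (\prod_(i < k) P (X i)) * dk d S X.

Definition Dk (R : realType) (T : finType) (k : nat) (U : kset T k) (x : T) : R :=
  (#|[set i : 'I_k | U i == x]%SET|%:R) / k%:R.

Definition coupling (R : realType) (T : finType) (mu nu : T -> R)
  (g : T -> T -> R) : Prop :=
  [/\ forall x y, 0 <= g x y,
      forall x, \sum_(y : T) g x y = mu x &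
      forall y, \sum_(x : T) g x y = nu y].

Definition dW (R : realType) (T : finType) (d : T -> T -> R) (mu nu : T -> R) : R :=
  inf [set c : R | exists g, coupling mu nu g /\
                     c = \sum_(x : T) \sum_(y : T) g x y * d x y].
Arguments Dk {R T k} U x.

From HB Require Import structures.
From mathcomp Require Import all_boot all_order fingroup perm all_algebra.
From mathcomp Require Import classical_sets.
From mathcomp Require Import reals.
From mathcomp Require Import zify ring lra.
Import Order.TTheory GRing.Theory Num.Theory.

(* For k-multisets, d_k(U, V) = k d_W(D_U, D_V). A matching gives a coupling of
   D_U and D_V of cost d_k(U, V) / k; conversely a coupling, spread over the
   indices, is a doubly stochastic matrix, which by Birkhoff's theorem (derived
   from Hall's) costs at least as much as some permutation. Averaging the optimal
   matchings of U with a random X ~ P_k likewise gives k d_W(D_U, P) <= cost(U).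
   Hence, by the triangle inequality for d_W, for every X
     d_k(S, X) <= k d_W(D_S, P) + k d_W(D_O, P) + k d_W(D_O, D_X)
              <= rho cost(O) + cost(O) + d_k(O, X),
   and taking the expectation over X gives the bound. *)

Set Implicit Arguments. Unset Strict Implicit. Unset Printing Implicit Defensive.

Section HallMarriage.
Variables (I J : finType).
Implicit Types (E : I -> J -> bool) (A B X : {set I}) (f g : I -> J).

Definition neighbours E A : {set J} := [set y | [exists x in A, E x y]].

Definition hall_condition E X := forall A, A \subset X -> #|A| <= #|neighbours E A|.

Definition matching E X f := {in X, forall x, E x (f x)} /\ {in X &, injective f}.

Lemma neighbours1 E x : neighbours E [set x] = [set y | E x y].
Proof.
apply/setP=> y; rewrite !inE; apply/existsP/idP => [[x' /andP[/set1P-> //]]|Exy].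
by exists x; rewrite inE eqxx.
Qed.

Lemma matchingU E A B f g : matching E A f -> matching E B g ->
  {in A & B, forall x y, f x != g y} ->
  matching E (A :|: B) (fun x => if x \in A then f x else g x).
Proof.
move=> [fE finj] [gE ginj] fg; split=> [x|x y].
  by rewrite inE; case: ifP => [xA _|_ /= xB]; [exact: fE | exact: gE].
rewrite !inE; case: ifP => xA; case: ifP => yA //= xAB yAB.
- exact: finj.
- by move=> e; case/negP: (fg x y xA yAB); rewrite e.
- by move=> e; case/negP: (fg y x yA xAB); rewrite e.
- exact: ginj.
Qed.

Lemma matchingW E E' X f :
  (forall x y, E' x y -> E x y) -> matching E' X f -> matching E X f.
Proof. by move=> EE' [fE finj]; split=> // x /fE/EE'. Qed.

(* Halmos-Vaughan induction: split X along a tight proper subset if there is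
   one; otherwise match a single edge and delete its endpoints. *)
Section HallStep.
Variables (E : I -> J -> bool) (X : {set I}).
Hypothesis IH : forall E' X', #|X'| < #|X| -> hall_condition E' X' ->
  exists f, matching E' X' f.
Hypothesis hallX : hall_condition E X.

Lemma matching_tight A : A \proper X -> 0 < #|A| ->
  #|neighbours E A| <= #|A| -> exists f, matching E X f.
Proof.
move=> AX A0 NA; have sAX := proper_sub AX.
have [f1 [f1E f1inj]] : exists f, matching E A f.
  apply: IH => [|B sBA]; first exact: proper_card.
  exact: hallX (fintype.subset_trans sBA sAX).
pose E2 x y := E x y && (y \notin neighbours E A).
have [f2 mf2] : exists f, matching E2 (X :\: A) f.
  apply: IH => [|B sB].
    by rewrite cardsDS //; move: A0 (subset_leq_card sAX); lia.
  have AB0 : #|A :&: B| = 0.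
    apply/eqP; rewrite cards_eq0; apply/eqP/setP=> x; rewrite !inE.
    by apply/andP=> -[xA /(fintype.subsetP sB)]; rewrite inE xA.
  have sABX : A :|: B \subset X.
    by rewrite finset.subUset sAX (fintype.subset_trans sB (subsetDl _ _)).
  have NAB : neighbours E (A :|: B) \subset neighbours E A :|: neighbours E2 B.
    apply/fintype.subsetP=> y; rewrite !inE => /existsP[x /andP[]]; rewrite inE.
    case/orP=> [xA Exy|xB Exy]; first by apply/orP; left; apply/existsP; exists x; rewrite xA.
    case NAy: (y \in neighbours E A); first by rewrite inE in NAy; rewrite NAy.
    by apply/orP; right; apply/existsP; exists x; rewrite xB /E2 Exy NAy.
  have := hallX sABX; rewrite cardsU AB0 subn0.
  have := leq_trans (subset_leq_card NAB) (leq_card_setU _ _); lia.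
rewrite -(finset.setID X A) (finset.setIidPr sAX).
exists (fun x => if x \in A then f1 x else f2 x); apply: matchingU => //.
  by apply: matchingW mf2 => x y /andP[].
move=> x y xA /(proj1 mf2)/andP[_]; apply: contra => /eqP <-.
by rewrite inE; apply/existsP; exists x; rewrite xA f1E.
Qed.

Lemma matching_surplus x : x \in X ->
  (forall A, A \proper X -> 0 < #|A| -> #|A| < #|neighbours E A|) ->
  exists f, matching E X f.
Proof.
move=> xX surplus.
have [y Exy] : exists y, E x y.
  have := hallX (A := [set x]); rewrite finset.sub1set xX cards1 neighbours1 card_gt0.
  by case/(_ isT)/set0Pn=> y; rewrite inE; exists y.
pose E1 a b := E a b && (b != y).
have [f1 mf1] : exists f, matching E1 (X :\ x) f.
  apply: IH => [|B sB]; first by rewrite (cardsD1 x X) xX.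
  have [B0|B0] := posnP #|B|; first by rewrite B0.
  have NB : neighbours E B :\ y \subset neighbours E1 B.
    apply/fintype.subsetP=> z; rewrite !inE => /andP[zy /existsP[w /andP[wB Ewz]]].
    by apply/existsP; exists w; rewrite wB /E1 Ewz zy.
  have := surplus B (sub_proper_trans sB (properD1 xX)) B0.
  have := subset_leq_card NB; have := cardsD1 y (neighbours E B).
  by case: (y \in neighbours E B) => /=; lia.
rewrite -(finset.setD1K xX).
exists (fun a => if a \in [set x] then y else f1 a); apply: matchingU.
- by split=> [a /set1P-> //|a b /set1P-> /set1P->].
- by apply: matchingW mf1 => a b /andP[].
- by move=> a b _ /(proj1 mf1)/andP[_]; rewrite eq_sym.
Qed.

End HallStep.

Theorem hall_marriage (j0 : J) E X : hall_condition E X -> exists f, matching E X f.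
Proof.
have [n] := ubnP #|X|; elim: n E X => // n IH E X /ltnSE leXn hallX.
have IH' E' X' : #|X'| < #|X| -> hall_condition E' X' -> exists f, matching E' X' f.
  by move=> ltX'X; apply: IH; apply: leq_trans leXn.
have [X0|/card_gt0P[x xX]] := posnP #|X|.
  by exists (fun=> j0); split=> ?; rewrite (cards0_eq X0) inE.
case: (boolP [exists A : {set I}, [&& A \proper X, 0 < #|A| & #|neighbours E A| <= #|A|]]).
  by case/existsP=> A /and3P[]; exact: matching_tight.
rewrite negb_exists => /forallP surplus; apply: (matching_surplus IH' hallX xX).
by move=> A AX A0; have := surplus A; rewrite AX A0 /= -ltnNge.
Qed.

End HallMarriage.

Local Open Scope ring_scope.

Lemma sumr_indicator (R : pzSemiRingType) (I : finType) (a : I) (F : I -> R) :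
  \sum_y (a == y)%:R * F y = F a.
Proof.
rewrite (bigD1 a) //= eqxx mul1r big1 ?addr0 // => y /negbTE.
by rewrite eq_sym => ->; rewrite mul0r.
Qed.

Lemma sumr_indicator1 (R : pzSemiRingType) (I : finType) (a : I) :
  \sum_y (a == y)%:R = 1 :> R.
Proof.
by rewrite -[RHS](sumr_indicator a (fun=> 1)); apply: eq_bigr => y _; rewrite mulr1.
Qed.

Section Birkhoff.
Variables (R : realFieldType) (I : finType).
Implicit Types (M C : I -> I -> R) (t lam : R) (s : {perm I}).

Definition doubly_stochastic t M :=
  [/\ forall i j, 0 <= M i j, forall i, \sum_j M i j = t & forall j, \sum_i M i j = t].

Definition supp M := [set ij : I * I | M ij.1 ij.2 != 0].

Definition peel M s lam i j := M i j - (s i == j)%:R * lam.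

Lemma doubly_stochastic_nonpos t M : doubly_stochastic t M -> t <= 0 ->
  forall i j, M i j = 0.
Proof.
move=> [M0 Mr _] t_le0 i j; apply: (psumr_eq0P (P := predT) (fun j _ => M0 i j)) => //.
by apply/eqP; rewrite eq_le {1}Mr t_le0 sumr_ge0.
Qed.

Lemma perm_in_support t M : doubly_stochastic t M -> 0 < t ->
  exists s, forall i, M i (s i) != 0.
Proof.
move=> [M0 Mr Mc] t_gt0.
case: (pickP (@predT I)) => [i0 _|I0]; last by exists 1%g => i; have := I0 i.
have [f [fE finj]] : exists f, matching (fun i j => M i j != 0) [set: I] f.
  apply: (hall_marriage i0) => A _; set N := neighbours _ A.
  have M_N i : i \in A -> \sum_(j in N) M i j = t.
    move=> iA; rewrite -(Mr i) [RHS](bigID (mem N)) /= [X in _ + X]big1 ?addr0 //.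
    move=> j jN; apply/eqP; apply: contraNT jN => Mij.
    by rewrite inE; apply/existsP; exists i; rewrite iA.
  (* The rows in A carry mass #|A| t, all of it inside the columns N. *)
  have : #|A|%:R * t <= #|N|%:R * t.
    rewrite !mulr_natl -!sumr_const -(eq_bigr _ M_N).
    apply: (@le_trans _ _ (\sum_i \sum_(j in N) M i j)).
      rewrite [leRHS](bigID (mem A)) /= lerDl.
      by apply: sumr_ge0 => i _; apply: sumr_ge0.
    by rewrite exchange_big /= (eq_bigr _ (fun j _ => Mc j)).
  by rewrite ler_pM2r // ler_nat.
have f_inj : injective f by move=> i j; apply: finj; rewrite inE.
by exists (perm f_inj) => i; rewrite permE; apply: fE; rewrite inE.
Qed.

Lemma peel_doubly_stochastic t M s lam : doubly_stochastic t M ->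
  (forall i, lam <= M i (s i)) -> doubly_stochastic (t - lam) (peel M s lam).
Proof.
move=> [M0 Mr Mc] lamM; split=> [i j|i|j]; rewrite /peel.
- by case: eqP => [<-|_]; rewrite ?mul1r ?subr_ge0 ?mul0r ?subr0.
- by rewrite sumrB Mr sumr_indicator.
rewrite sumrB Mc (eq_bigr (fun i => ((s^-1)%g j == i)%:R * lam)) ?sumr_indicator //.
by move=> i _; rewrite (canF_eq (permK s)) eq_sym.
Qed.

Lemma card_supp_peel M s lam i : (forall i j, 0 <= peel M s lam i j) -> 0 < lam ->
  M i (s i) = lam -> (#|supp (peel M s lam)| < #|supp M|)%N.
Proof.
move=> peel0 lam_gt0 Mlam; apply/proper_card/fintype.properP; split.
  apply/fintype.subsetP => -[a b]; rewrite !inE /=; apply: contraNN => /eqP Mab.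
  have := peel0 a b; rewrite /peel Mab sub0r oppr_ge0 => ab_le0.
  by rewrite oppr_eq0 eq_le ab_le0 mulr_ge0 ?ler0n ?ltW.
exists (i, s i); rewrite !inE /= /peel Mlam; first exact: lt0r_neq0.
by rewrite eqxx mul1r subrr eqxx.
Qed.

Lemma sum_peel M C s lam : \sum_i \sum_j M i j * C i j =
  \sum_i \sum_j peel M s lam i j * C i j + lam * \sum_i C i (s i).
Proof.
rewrite mulr_sumr -big_split; apply: eq_bigr => i _ /=.
under [X in _ = X + _]eq_bigr => j _ do rewrite /peel mulrBl -mulrA.
by rewrite sumrB sumr_indicator subrK.
Qed.

Theorem doubly_stochastic_perm_le C t M : doubly_stochastic t M ->
  exists s, t * \sum_i C i (s i) <= \sum_i \sum_j M i j * C i j.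
Proof.
have [n] := ubnP #|supp M|; elim: n t M => // n IH t M /ltnSE suppMn dsM.
have [t_le0|t_gt0] := lerP t 0.
  exists 1%g; have M0 := doubly_stochastic_nonpos dsM t_le0; have [_ Mr _] := dsM.
  rewrite mulr_sumr; apply: ler_sum => i _.
  by rewrite -(Mr i) !big1 ?mul0r // => j _; rewrite M0 ?mul0r.
have [s sM] := perm_in_support dsM t_gt0.
case: (pickP (@predT I)) => [i0 _|I0]; last by exists s; rewrite !big1 ?mulr0 // => i; have := I0 i.
(* Peel off lam times s, lam the least entry along s: the support shrinks. *)
pose i1 := [arg min_(i < i0) M i (s i)]%O.
have lam_min i : M i1 (s i1) <= M i (s i).
  by rewrite /i1; case: arg_minP => // i2 _; apply.
set lam := M i1 (s i1) in lam_min.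
have lam_gt0 : 0 < lam by have [M0 _ _] := dsM; rewrite lt0r /lam sM M0.
have dsM' := peel_doubly_stochastic dsM lam_min; have [peel0 peelr _] := dsM'.
have [s' le_s'] := IH _ _ (leq_trans (card_supp_peel peel0 lam_gt0 erefl) suppMn) dsM'.
have lam_le_t : 0 <= t - lam by rewrite -(peelr i0) sumr_ge0.
rewrite (sum_peel _ _ s lam); move: le_s'.
set a := \sum_i C i (s i); set b := \sum_i C i (s' i).
have [ab|ba] := lerP a b.
  exists s; rewrite -/a.
  have : (t - lam) * a <= (t - lam) * b by rewrite ler_wpM2l.
  lra.
exists s'; rewrite -/b.
have : lam * b <= lam * a by rewrite ler_wpM2l // ltW.
lra.
Qed.

End Birkhoff.

Section Transport.
Variables (R : realType) (T : finType) (d : T -> T -> R).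
Hypothesis d_ge0 : forall x y, 0 <= d x y.
Local Open Scope classical_set_scope.
Implicit Types (mu nu pi : T -> R) (g : T -> T -> R).

Definition transport_cost g := \sum_x \sum_y g x y * d x y.

Lemma dW_le_cost mu nu g : coupling mu nu g -> dW d mu nu <= transport_cost g.
Proof.
move=> cg; apply: ge_inf; last by exists g.
exists 0 => _ [g' [[g'0 _ _] ->]].
by apply: sumr_ge0 => x _; apply: sumr_ge0 => y _; rewrite mulr_ge0.
Qed.

Lemma dW_ge mu nu c : (exists g, coupling mu nu g) ->
  (forall g, coupling mu nu g -> c <= transport_cost g) -> c <= dW d mu nu.
Proof.
move=> [g cg] le_c; apply: lb_le_inf; first by exists (transport_cost g), g.
by move=> _ [g' [cg' ->]]; exact: le_c.
Qed.

Lemma coupling_transpose mu nu g :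
  coupling mu nu g -> coupling nu mu (fun y x => g x y).
Proof. by case. Qed.

Lemma coupling_le_l mu nu g x y : coupling mu nu g -> g x y <= mu x.
Proof. by case=> g0 <- _; rewrite (bigD1 y) //= lerDl sumr_ge0. Qed.

Lemma coupling_le_r mu nu g x y : coupling mu nu g -> g x y <= nu y.
Proof. by move/coupling_transpose/coupling_le_l. Qed.

Lemma coupling_prod mu nu : is_prob mu -> is_prob nu ->
  coupling mu nu (fun x y => mu x * nu y).
Proof.
move=> [mu0 mu1] [nu0 nu1]; split=> [x y|x|y]; first by rewrite mulr_ge0.
  by rewrite -mulr_sumr nu1 mulr1.
by rewrite -mulr_suml mu1 mul1r.
Qed.

Lemma dW_sym mu nu : (forall x y, d x y = d y x) -> dW d mu nu = dW d nu mu.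
Proof.
suff le_sym mu' nu' : (forall x y, d x y = d y x) ->
    [set c | exists g, coupling mu' nu' g /\ c = transport_cost g] `<=`
    [set c | exists g, coupling nu' mu' g /\ c = transport_cost g].
  by move=> dsym; rewrite /dW; congr inf; apply/seteqP; split; exact: le_sym.
move=> dsym _ [g [cg ->]]; exists (fun y x => g x y); split; first exact: coupling_transpose.
by rewrite /transport_cost exchange_big; under eq_bigr do under eq_bigr do rewrite dsym.
Qed.

Lemma coupling_divKl mu nu g x y : coupling mu nu g -> g x y * mu x / mu x = g x y.
Proof.
move=> cg; have [mu0|/mulfK-> //] := eqVneq (mu x) 0.
have [g0 _ _] := cg; have := coupling_le_l x y cg; rewrite mu0 => gle0.
suff -> : g x y = 0 by rewrite !mul0r.
by apply/eqP; rewrite eq_le gle0 g0.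
Qed.

Lemma coupling_divKr mu nu g x y : coupling mu nu g -> g x y * nu y / nu y = g x y.
Proof. by move/coupling_transpose/coupling_divKl. Qed.

(* pi y = 0 forces g1 x y = 0, so the junk value _ / 0 = 0 is harmless. *)
Definition glue pi g1 g2 x z := \sum_y g1 x y * g2 y z / pi y.

Section Glue.
Variables (mu pi nu : T -> R) (g1 g2 : T -> T -> R).
Hypotheses (cg1 : coupling mu pi g1) (cg2 : coupling pi nu g2).

Let glue_sum_r x y : \sum_z g1 x y * g2 y z / pi y = g1 x y.
Proof.
have [_ g2l _] := cg2.
by rewrite -mulr_suml -mulr_sumr g2l (coupling_divKr _ _ cg1).
Qed.

Let glue_sum_l y z : \sum_x g1 x y * g2 y z / pi y = g2 y z.
Proof.
have [_ _ g1r] := cg1.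
by rewrite -!mulr_suml g1r [pi y * _]mulrC (coupling_divKl _ _ cg2).
Qed.

Lemma glue_coupling : coupling mu nu (glue pi g1 g2).
Proof.
have [g10 g1l g1r] := cg1; have [g20 _ g2r] := cg2.
split=> [x z|x|z]; rewrite /glue.
- apply: sumr_ge0 => y _; rewrite !mulr_ge0 ?invr_ge0 //.
  by rewrite -g1r sumr_ge0.
- by rewrite exchange_big /= (eq_bigr _ (fun y _ => glue_sum_r x y)) g1l.
- by rewrite exchange_big /= (eq_bigr _ (fun y _ => glue_sum_l y z)) g2r.
Qed.

Hypothesis d_triangle : forall x y z, d x z <= d x y + d y z.

Lemma glue_cost :
  transport_cost (glue pi g1 g2) <= transport_cost g1 + transport_cost g2.
Proof.
have [g10 _ g1r] := cg1; have [g20 _ _] := cg2.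
pose G x y z := g1 x y * g2 y z / pi y.
have G0 x y z : 0 <= G x y z by rewrite !mulr_ge0 ?invr_ge0 // -g1r sumr_ge0.
have cost1 : \sum_x \sum_z \sum_y G x y z * d x y = transport_cost g1.
  apply: eq_bigr => x _; rewrite exchange_big; apply: eq_bigr => y _.
  by rewrite -mulr_suml glue_sum_r.
have cost2 : \sum_x \sum_z \sum_y G x y z * d y z = transport_cost g2.
  rewrite exchange_big; under eq_bigr do rewrite exchange_big.
  rewrite exchange_big; apply: eq_bigr => y _; apply: eq_bigr => z _.
  by rewrite -mulr_suml glue_sum_l.
rewrite -cost1 -cost2 -big_split; apply: ler_sum => x _.
rewrite -big_split; apply: ler_sum => z _; rewrite -big_split /= mulr_suml.
by apply: ler_sum => y _; rewrite -mulrDr ler_wpM2l ?G0 ?d_triangle.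
Qed.

End Glue.

Lemma dW_triangle mu pi nu : (forall x y z, d x z <= d x y + d y z) ->
  is_prob mu -> is_prob pi -> is_prob nu -> dW d mu nu <= dW d mu pi + dW d pi nu.
Proof.
move=> d_triangle Pmu Ppi Pnu.
have le_glue g1 g2 : coupling mu pi g1 -> coupling pi nu g2 ->
    dW d mu nu <= transport_cost g1 + transport_cost g2.
  move=> cg1 cg2; apply: le_trans (glue_cost cg1 cg2 d_triangle).
  exact/dW_le_cost/glue_coupling.
rewrite addrC -lerBlDr; apply: dW_ge => [|g2 cg2]; first by eexists; exact: coupling_prod.
rewrite lerBlDr addrC -lerBlDr; apply: dW_ge => [|g1 cg1]; first by eexists; exact: coupling_prod.
by rewrite lerBlDr; exact: le_glue.
Qed.

Lemma dW_le_mix (I : finType) (w : I -> R) (mus nus : I -> T -> R)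
    (gs : I -> T -> T -> R) mu nu :
  (forall i, 0 <= w i) -> (forall i, coupling (mus i) (nus i) (gs i)) ->
  (forall x, \sum_i w i * mus i x = mu x) -> (forall y, \sum_i w i * nus i y = nu y) ->
  dW d mu nu <= \sum_i w i * transport_cost (gs i).
Proof.
move=> w0 cgs wmu wnu; pose g x y := \sum_i w i * gs i x y.
suff <- : transport_cost g = \sum_i w i * transport_cost (gs i).
  apply: dW_le_cost; split=> [x y|x|y].
  - by apply: sumr_ge0 => i _; rewrite mulr_ge0 //; case: (cgs i).
  - rewrite -wmu exchange_big; apply: eq_bigr => i _.
    by rewrite -mulr_sumr; case: (cgs i) => _ ->.
  - rewrite -wnu exchange_big; apply: eq_bigr => i _.
    by rewrite -mulr_sumr; case: (cgs i) => _ _ ->.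
rewrite /transport_cost; under eq_bigr do under eq_bigr do rewrite mulr_suml.
under eq_bigr do rewrite exchange_big; rewrite exchange_big; apply: eq_bigr => i _.
rewrite mulr_sumr; apply: eq_bigr => x _; rewrite mulr_sumr; apply: eq_bigr => y _.
by rewrite mulrA.
Qed.

End Transport.

Section KSets.
Variables (R : realType) (T : finType) (k : nat).
Implicit Types (U V : kset T k) (s : 'S_k).

Definition mult U x : R := \sum_i (U i == x)%:R.

Lemma Dk_mult U x : Dk U x = mult U x / k%:R.
Proof.
rewrite /Dk /mult -sum1_card natr_sum big_mkcond /=; congr (_ / _).
by apply: eq_bigr => i _; rewrite inE; case: eqP.
Qed.

Lemma sum_mult U (F : T -> R) : \sum_i F (U i) = \sum_x mult U x * F x.
Proof.
under eq_bigr => i _ do rewrite -(sumr_indicator (U i) F).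
by rewrite exchange_big; apply: eq_bigr => x _; rewrite mulr_suml.
Qed.

Lemma mult_ge0 U x : 0 <= mult U x.
Proof. exact: sumr_ge0. Qed.

Lemma mult_gt0 U i : 0 < mult U (U i).
Proof. by rewrite /mult (bigD1 i) //= eqxx ltr_pwDl // sumr_ge0. Qed.

Lemma Dk_prob U : (0 < k)%N -> is_prob (Dk (R := R) U).
Proof.
move=> k_gt0; split=> [x|]; first by rewrite Dk_mult divr_ge0 ?mult_ge0.
have sum_k : \sum_x mult U x = k%:R.
  by rewrite -[LHS](eq_bigr _ (fun x _ => mulr1 (mult U x))) -sum_mult sumr_const card_ord.
by rewrite (eq_bigr _ (fun x _ => Dk_mult U x)) -mulr_suml sum_k divff // pnatr_eq0 -lt0n.
Qed.

Definition matching_plan U V s x y : R :=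
  (\sum_i (U i == x)%:R * (V (s i) == y)%:R) / k%:R.

Lemma matching_plan_coupling U V s : coupling (Dk U) (Dk V) (matching_plan U V s).
Proof.
rewrite /matching_plan; split=> [x y|x|y].
- by rewrite divr_ge0 // sumr_ge0 // => i _; rewrite mulr_ge0.
- rewrite Dk_mult -mulr_suml exchange_big; congr (_ / _); apply: eq_bigr => i _.
  by rewrite -mulr_sumr sumr_indicator1 mulr1.
- rewrite Dk_mult -mulr_suml exchange_big /mult [X in _ = X / _](reindex_inj (@perm_inj _ s)).
  congr (_ / _); apply: eq_bigr => i _.
  by rewrite -mulr_suml sumr_indicator1 mul1r.
Qed.

Variable d : T -> T -> R.

Lemma matching_plan_cost U V s :
  transport_cost d (matching_plan U V s) = (\sum_i d (U i) (V (s i))) / k%:R.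
Proof.
have expand i : d (U i) (V (s i)) =
    \sum_x \sum_y (U i == x)%:R * (V (s i) == y)%:R * d x y.
  rewrite -(sumr_indicator (U i) (fun x => d x (V (s i)))); apply: eq_bigr => x _.
  by rewrite -(sumr_indicator (V (s i)) (d x)) mulr_sumr; under eq_bigr do rewrite mulrA.
rewrite (eq_bigr _ (fun i _ => expand i)) exchange_big mulr_suml.
apply: eq_bigr => x _; rewrite exchange_big mulr_suml; apply: eq_bigr => y _.
by rewrite /matching_plan mulrAC mulr_suml.
Qed.

Hypothesis d_ge0 : forall x y, 0 <= d x y.

Definition opt_matching U V : 'S_k :=
  [arg min_(s < (1%g : 'S_k)) \sum_i d (U i) (V (s i))]%O.

Lemma dk_le_matching U V s : dk d U V <= \sum_i d (U i) (V (s i)).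
Proof.
apply: ge_inf; last by exists s.
by exists 0 => _ [s' ->]; apply: sumr_ge0.
Qed.

Lemma dk_opt_matching U V : dk d U V = \sum_i d (U i) (V (opt_matching U V i)).
Proof.
apply/le_anti; rewrite dk_le_matching /=.
apply: lb_le_inf => [|_ [s ->]]; first by eexists; exists 1%g.
by rewrite /opt_matching; case: arg_minP => // s' _; apply.
Qed.

Lemma dk_le_cost U V g : (0 < k)%N -> coupling (Dk U) (Dk V) g ->
  dk d U V <= k%:R * transport_cost d g.
Proof.
move=> k_gt0 cg; pose h x y := g x y / (mult U x * mult V y).
have hK x y : mult U x * mult V y * h x y = g x y.
  have [m0|m0] := eqVneq (mult U x * mult V y) 0; last by rewrite mulrC divfK.
  suff gxy0 : g x y = 0 by rewrite /h gxy0 mul0r mulr0.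
  have [g0 _ _] := cg; apply/eqP; rewrite eq_le g0 andbT.
  move/eqP: m0; rewrite mulf_eq0 => /orP[] /eqP m0.
    by have := coupling_le_l x y cg; rewrite Dk_mult m0 mul0r.
  by have := coupling_le_r x y cg; rewrite Dk_mult m0 mul0r.
(* M spreads g x y evenly over the index pairs (i, j) with U i = x, V j = y. *)
pose M i j := h (U i) (V j).
have dsM : doubly_stochastic k%:R^-1 M.
  have [g0 gl gr] := cg; split=> [i j|i|j].
  - by rewrite /M /h divr_ge0 ?mulr_ge0 ?mult_ge0.
  - apply: (mulfI (lt0r_neq0 (mult_gt0 U i))); rewrite (sum_mult V) mulr_sumr.
    by under eq_bigr do rewrite mulrA hK; rewrite gl Dk_mult mulrC.
  - apply: (mulfI (lt0r_neq0 (mult_gt0 V j))); rewrite (sum_mult U (fun x => h x (V j))) mulr_sumr.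
    by under eq_bigr do rewrite mulrA [mult V _ * _]mulrC hK; rewrite gr Dk_mult mulrC.
have [s] := doubly_stochastic_perm_le (fun i j => d (U i) (V j)) dsM.
have -> : \sum_i \sum_j M i j * d (U i) (V j) = transport_cost d g.
  rewrite (sum_mult U (fun x => \sum_j h x (V j) * d x (V j))).
  apply: eq_bigr => x _; rewrite (sum_mult V (fun y => h x y * d x y)) mulr_sumr.
  by apply: eq_bigr => y _; rewrite mulrA mulrA hK.
rewrite ler_pdivrMl ?ltr0n //; apply: le_trans; exact: dk_le_matching.
Qed.

Lemma dk_dW U V : (0 < k)%N -> dk d U V = k%:R * dW d (Dk U) (Dk V).
Proof.
move=> k_gt0; have k_pos : 0 < k%:R :> R by rewrite ltr0n.
apply/le_anti/andP; split.
  rewrite -ler_pdivrMl //; apply: dW_ge => [|g cg].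
    by eexists; exact: (matching_plan_coupling U V 1%g).
  by rewrite ler_pdivrMl //; exact: dk_le_cost.
rewrite -ler_pdivlMl //.
apply: le_trans (dW_le_cost d_ge0 (matching_plan_coupling U V (opt_matching U V))) _.
by rewrite matching_plan_cost dk_opt_matching mulrC.
Qed.

End KSets.

Section RandomKSet.
Variables (R : realType) (T : finType) (P : T -> R) (k : nat).
Hypothesis P_prob : is_prob P.
Implicit Types (U V X : kset T k).

Definition kset_weight X : R := \prod_(i < k) P (X i).

Lemma kset_weight_ge0 X : 0 <= kset_weight X.
Proof. by apply: prodr_ge0 => i _; case: P_prob. Qed.

Lemma sum_kset_weight : \sum_X kset_weight X = 1.
Proof.
rewrite /kset_weight /kset -(bigA_distr_bigA (fun _ : 'I_k => P)) /=.
by rewrite big1 // => i _; case: P_prob.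
Qed.

Lemma sum_kset_weight_indicator i y : \sum_X kset_weight X * (X i == y)%:R = P y.
Proof.
pose F (j : 'I_k) x := if j == i then (y == x)%:R * P x else P x.
have [_ P1] := P_prob.
transitivity (\prod_j \sum_x F j x).
  rewrite /kset bigA_distr_bigA /=; apply: eq_big => // X _.
  rewrite /kset_weight (bigD1 i) //= [RHS](bigD1 i) //= /F eqxx eq_sym.
  rewrite [X in _ = _ * X](eq_bigr (fun j => P (X j))) => [|j /negbTE-> //].
  ring.
rewrite (bigD1 i) //= [X in _ * X]big1 => [|j /negbTE ji]; last by rewrite /F ji.
by rewrite mulr1 /F eqxx sumr_indicator.
Qed.

Lemma sum_kset_weight_Dk y : (0 < k)%N -> \sum_X kset_weight X * Dk X y = P y.
Proof.
move=> k_gt0; have k0 : k%:R != 0 :> R by rewrite pnatr_eq0 -lt0n.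
under eq_bigr do rewrite Dk_mult mulrA /mult mulr_sumr.
rewrite -mulr_suml exchange_big /=.
under eq_bigr do rewrite sum_kset_weight_indicator.
by rewrite sumr_const card_ord -[P y *+ k]mulr_natr mulfK.
Qed.

Variable d : T -> T -> R.
Hypothesis d_ge0 : forall x y, 0 <= d x y.

Lemma kRP_costE U : kRP_cost d P U = \sum_X kset_weight X * dk d U X.
Proof. by []. Qed.

Lemma kRP_cost_le U V a : (forall X, dk d U X <= a + dk d V X) ->
  kRP_cost d P U <= a + kRP_cost d P V.
Proof.
move=> le_UV; rewrite !kRP_costE.
apply: le_trans (ler_sum _ (fun X _ => ler_wpM2l (kset_weight_ge0 X) (le_UV X))) _.
under eq_bigr do rewrite mulrDr.
by rewrite big_split /= -mulr_suml sum_kset_weight mul1r.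
Qed.

Lemma dW_Dk_le_kRP_cost U : (0 < k)%N -> k%:R * dW d (Dk U) P <= kRP_cost d P U.
Proof.
move=> k_gt0; rewrite -ler_pdivlMl ?ltr0n //.
pose gs X := matching_plan R U X (opt_matching d U X).
apply: le_trans (dW_le_mix d_ge0 (w := kset_weight) (mus := fun=> Dk U) (nus := Dk) (gs := gs)
  kset_weight_ge0 (fun X => matching_plan_coupling _ _ _ _) _ (sum_kset_weight_Dk ^~ k_gt0)) _.
  by move=> x; rewrite -mulr_suml sum_kset_weight mul1r.
rewrite kRP_costE mulr_sumr; apply: ler_sum => X _.
by rewrite matching_plan_cost -dk_opt_matching // mulrA mulrC.
Qed.

End RandomKSet.

Unset Implicit Arguments. Set Strict Implicit.

Theorem theorem5 (R : realType) (T : finType) (d : T -> T -> R) (P : T -> R)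
  (k : nat) (O S : kset T k) (rho : R) :
  is_metric d -> is_prob P -> (1 <= k)%N ->
  (forall U : kset T k, kRP_cost d P O <= kRP_cost d P U) ->
  1 <= rho ->
  (forall U : kset T k, dW d (Dk S) P <= rho * dW d (Dk U) P) ->
  kRP_cost d P S <= (rho + 2) * kRP_cost d P O.
Proof.
move=> [d_ge0 _ d_sym d_triangle] P_prob k_gt0 _ rho_ge1 S_approx.
have k_ge0 : 0 <= k%:R :> R := ler0n R k.
have Dk_P (U : kset T k) := Dk_prob R U k_gt0.
have dW_O := dW_Dk_le_kRP_cost P_prob d_ge0 O k_gt0.
set c := kRP_cost d P O in dW_O *.
have dW_S : k%:R * dW d (Dk S) P <= rho * c.
  apply: le_trans (ler_wpM2l k_ge0 (S_approx O)) _.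
  by rewrite mulrCA ler_wpM2l // (le_trans ler01).
have dk_S X : dk d S X <= rho * c + c + dk d O X.
  rewrite !(dk_dW d_ge0) //.
  have := ler_wpM2l k_ge0 (dW_triangle d_ge0 d_triangle (Dk_P S) P_prob (Dk_P X)).
  have := ler_wpM2l k_ge0 (dW_triangle d_ge0 d_triangle P_prob (Dk_P O) (Dk_P X)).
  rewrite (dW_sym P (Dk O) d_sym) !mulrDr; lra.
apply: le_trans (kRP_cost_le P_prob dk_S) _; rewrite -/c; lra.
Qed.
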